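(* Let $(G,\omega)$ be a weighted digraph without loops and let $V$ be its square-rooted weighted Hashimoto matrix. Then the radius of convergence $r$ of $\sum_{k=0}^\infty t^kp_k(A)$ equals $\rho(V)^{-1}$, where $\rho$ denotes spectral radius and $\rho(V)^{-1}:=\infty$ if $\rho(V)=0$.
   Context: A weighted digraph is a digraph $G=(V(G),E)$ (no loops or multiple edges) with a weight function $\omega:E\to(0,\infty)$. The weight of a walk $(e_1,\dots,e_k)$ (edges $e_r=(v_r,v_{r+1})$) is $\prod_r\omega(e_r)$; a walk is non-backtracking if $v_{r+2}\ne v_r$ for all $r$. $p_k(A)$ is the matrix whose $(i,j)$ entry is the sum of the weights of all non-backtracking walks of length $k$ from $i$ to $j$ ($p_0(A)=I$). $V$ is the $\#E\times\#E$ matrix indexed by edges with $V_{ef}=\sqrt{\omega(e)\omega(f)}$ if $e=(i,j)$, $f=(j,k)$ with $k\ne i$, and $V_{ef}=0$ otherwise. *)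

From mathcomp Require Import all_boot all_order all_algebra.
From mathcomp Require Import all_classical all_reals all_analysis.
From mathcomp Require Import complex.
Set Implicit Arguments. Unset Strict Implicit. Unset Printing Implicit Defensive.
Import Order.TTheory GRing.Theory Num.Theory.
Import numFieldNormedType.Exports.
Local Open Scope ring_scope.
Local Open Scope classical_set_scope.
Local Open Scope ring_scope.

(* A weighted digraph on a finite vertex type T is given by an edge relation
   G : rel T (G i j means (i,j) is an edge; no multiple edges automatically)
   and a weight function w : T -> T -> R, positive on edges (values off edges
   are irrelevant).  "No loops" is the hypothesis irreflexive G. *)

Definition edges (T : finType) (G : rel T) : {set T * T} :=
  [set e : T * T | G e.1 e.2].

(* p_k(A)_{ij}: sum of the weights of all non-backtracking walks of length k
   from i to j. *)
Definition pk (R : realType) (T : finType) (G : rel T) (w : T -> T -> R)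
    (k : nat) (i j : T) : R :=
  \sum_(s : (k.+1).-tuple T |
          [&& tnth s ord0 == i, tnth s ord_max == j,
              [forall r : 'I_k, G (nth i s r) (nth i s r.+1)] &
              [forall r : 'I_k.-1, nth i s r.+2 != nth i s r]])
    \prod_(r < k) w (nth i s r) (nth i s r.+1).

Definition hashimoto (R : realType) (T : finType) (G : rel T)
    (w : T -> T -> R) : 'M[R]_#|edges G| :=
  \matrix_(a, b)
    let e := enum_val a in let f := enum_val b in
    if (e.2 == f.1) && (f.2 != e.1)
    then Num.sqrt (w e.1 e.2 * w f.1 f.2) else 0.

(* Spectral radius of a real square matrix: the largest modulus of its
   (complex) eigenvalues (0 for a 0x0 matrix). *)
Definition spectral_radius (R : realType) (n : nat) (M : 'M[R]_n) : R :=
  sup [set ComplexField.Normc.normc z | z in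
        [set z : R[i] | eigenvalue (map_mx (fun x => x%:C%C) M) z]]%classic.

Definition conv_radius (R : realType) (T : finType) (P : nat -> T -> T -> R)
    : \bar R :=
  ereal_sup [set x%:E | x in
    [set t : R | 0 <= t /\
       forall i j, cvgn (series (fun k => t ^+ k * P k i j))%R]]%classic.

(* Splitting a non-backtracking walk of length k+1 at its first and last edge
   gives p_{k+1}(A)_{ij} = sum_{e from i, f into j} sqrt(w e) (V^k)_{ef} sqrt(w f).
   As V is nonnegative, its powers grow like rho(V)^k from both sides: entrywise
   they are O(rho'^k) for every rho' > rho(V) (factor the characteristic
   polynomial and use Cayley-Hamilton), while for an eigenvalue z some column
   sum of V^k is at least |z|^k (apply V^k to a left eigenvector at its largest
   coordinate).  Hence sum t^k p_k converges when t rho(V) < 1, and its terms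
   do not tend to 0 when t rho(V) > 1. *)

From mathcomp Require Import all_boot all_order all_algebra.
From mathcomp Require Import all_classical all_reals all_analysis.
From mathcomp Require Import complex.
From mathcomp Require Import ring lra.
Set Implicit Arguments. Unset Strict Implicit. Unset Printing Implicit Defensive.
Import Order.TTheory GRing.Theory Num.Theory.
Import numFieldNormedType.Exports.
Local Open Scope ring_scope.

Section MatrixPowerGrowth.
Variable R : rcfType.
Local Notation C := R[i].
Local Notation normc := ComplexField.Normc.normc.

Lemma normc_ge0 (x : C) : 0 <= normc x.
Proof. by case: x => a b; rewrite /= sqrtr_ge0. Qed.

Lemma normc_sum_le (I : Type) (r : seq I) (P : pred I) (F : I -> C) :
  normc (\sum_(i <- r | P i) F i) <= \sum_(i <- r | P i) normc (F i).
Proof.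
elim/big_rec2: _ => [|i y x _ IH]; first by rewrite ComplexField.Normc.normc0.
by apply: le_trans (le_normcD _ _) _; rewrite lerD2l.
Qed.

Lemma normcX (x : C) k : normc (x ^+ k) = normc x ^+ k.
Proof.
elim: k => [|k IH]; first by rewrite !expr0 ComplexField.Normc.normc1.
by rewrite !exprS ComplexField.Normc.normcM IH.
Qed.

Lemma normc_real (x : R) : normc x%:C%C = `|x|.
Proof. by rewrite /= expr0n /= addr0 sqrtr_sqr. Qed.

Definition mnorm n m (X : 'M[C]_(n, m)) : R := \sum_i \sum_j normc (X i j).

Lemma mnorm_ge0 n m (X : 'M[C]_(n, m)) : 0 <= mnorm X.
Proof. by apply: sumr_ge0 => i _; apply: sumr_ge0 => j _; apply: normc_ge0. Qed.

Lemma mnorm0 n m : mnorm (0 : 'M[C]_(n, m)) = 0.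
Proof.
rewrite /mnorm big1 // => i _; rewrite big1 // => j _.
by rewrite mxE ComplexField.Normc.normc0.
Qed.

Lemma mnormD n m (X Y : 'M[C]_(n, m)) : mnorm (X + Y) <= mnorm X + mnorm Y.
Proof.
rewrite /mnorm -big_split /=; apply: ler_sum => i _.
by rewrite -big_split /=; apply: ler_sum => j _; rewrite mxE le_normcD.
Qed.

Lemma mnormZ n m (z : C) (X : 'M[C]_(n, m)) :
  mnorm (z *: X) = normc z * mnorm X.
Proof.
rewrite /mnorm big_distrr /=; apply: eq_bigr => i _.
by rewrite big_distrr /=; apply: eq_bigr => j _; rewrite mxE ComplexField.Normc.normcM.
Qed.

Lemma colsum_le_mnorm n m (X : 'M[C]_(n, m)) j :
  \sum_i normc (X i j) <= mnorm X.
Proof.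
apply: ler_sum => i _; rewrite (bigD1 j) //= lerDl.
by apply: sumr_ge0 => k _; apply: normc_ge0.
Qed.

Lemma normc_entry_le_mnorm n m (X : 'M[C]_(n, m)) i j : normc (X i j) <= mnorm X.
Proof.
apply: le_trans (colsum_le_mnorm X j); rewrite (bigD1 i) //= lerDl.
by apply: sumr_ge0 => k _; apply: normc_ge0.
Qed.

Lemma mulmx_powS_shift n (X A : 'M[C]_n) (z : C) k :
  X * A ^+ k.+1 = X * (A - z%:M) * A ^+ k + z *: (X * A ^+ k).
Proof.
have cA : GRing.comm (A - z%:M) (A ^+ k).
  apply/commrX/commr_sym/commrB; first exact: commr_refl.
  by rewrite /GRing.comm -!mulmxE scalar_mxC.
rewrite -mulrA cA mulrA mulrBr -mulrA -exprSr -mulmxE mul_mx_scalar mulmxE.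
by rewrite subrK.
Qed.

(* Induction on the factors of the annihilating product: one factor (A - z)
   costs a geometric series of ratio |z| / rho' <= rho / rho' < 1. *)
Lemma annihilated_pow_bound n (A : 'M[C]_n) (rho rho' : R) (rs : seq C) :
  0 <= rho -> rho < rho' -> (forall z, z \in rs -> normc z <= rho) ->
  forall X : 'M[C]_n, X * \prod_(z <- rs) (A - z%:M) = 0 ->
  exists2 K, 0 <= K & forall k, mnorm (X * A ^+ k) <= K * rho' ^+ k.
Proof.
move=> rho0 rho_lt; elim: rs => [|z rs IH] rs_le X.
  rewrite big_nil mulr1 => ->; exists 0 => // k.
  by rewrite mul0r mnorm0 mul0r.
rewrite big_cons mulrA => /(IH _)[y ys|K' K'0 HK']; first by rewrite rs_le // inE ys orbT.
have z_le : normc z <= rho by rewrite rs_le // inE eqxx.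
have gap : 0 < rho' - rho by rewrite subr_gt0.
pose K := mnorm X + K' / (rho' - rho).
have K0 : 0 <= K by rewrite addr_ge0 ?mnorm_ge0 // divr_ge0 // ltW.
have K_rec : K' + rho * K <= K * rho'.
  have : K * (rho' - rho) = mnorm X * (rho' - rho) + K'.
    by rewrite /K mulrDl divfK // gt_eqF.
  have : 0 <= mnorm X * (rho' - rho) by rewrite mulr_ge0 ?mnorm_ge0 // ltW.
  lra.
exists K => //; elim=> [|k IHk].
  by rewrite !expr0 !mulr1 lerDl divr_ge0 // ltW.
rewrite (mulmx_powS_shift _ _ z); apply: le_trans (mnormD _ _) _; rewrite mnormZ.
have rk : 0 <= rho' ^+ k by rewrite exprn_ge0 // ltW // (le_lt_trans rho0).
apply: le_trans (lerD (HK' k) (ler_pM (normc_ge0 z) (mnorm_ge0 _) z_le IHk)) _.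
by rewrite mulrA -mulrDl exprS mulrA ler_wpM2r.
Qed.

Lemma mxpow_entry_bound n (A : 'M[C]_n) (rho rho' : R) :
  0 <= rho -> rho < rho' -> (forall z, eigenvalue A z -> normc z <= rho) ->
  exists2 K, 0 <= K & forall k a b, normc ((A ^+ k) a b) <= K * rho' ^+ k.
Proof.
move=> rho0 rho_lt eig_le; case: n A eig_le => [|n] A eig_le.
  by exists 0 => // k [].
have [rs char_polyE] := closed_field_poly_normal (char_poly A).
rewrite (monicP (char_poly_monic A)) scale1r in char_polyE.
have annih : 1 * \prod_(z <- rs) (A - z%:M) = 0.
  rewrite mul1r -(Cayley_Hamilton A) char_polyE rmorph_prod /=.
  by apply: eq_bigr => z _; rewrite rmorphB /= horner_mx_X horner_mx_C.
have [|K K0 HK] := annihilated_pow_bound rho0 rho_lt _ annih.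
  by move=> z zr; apply: eig_le; rewrite eigenvalue_root_char char_polyE root_prod_XsubC.
exists K => // k a b; apply: le_trans (HK k).
by rewrite mul1r normc_entry_le_mnorm.
Qed.

Lemma eigenvalue_pow_le_colsum n (A : 'M[C]_n) z : eigenvalue A z ->
  exists b, forall k, normc z ^+ k <= \sum_a normc ((A ^+ k) a b).
Proof.
case/eigenvalueP => v vA v_neq0.
have vAk k : v *m A ^+ k = z ^+ k *: v.
  elim: k => [|k IH]; first by rewrite !expr0 mulmx1 scale1r.
  by rewrite exprSr -mulmxE mulmxA IH -scalemxAl vA scalerA -exprSr.
have [b0 vb0] : exists b0, v 0 b0 != 0.
  apply/existsP; apply: contraNT v_neq0 => /existsPn v0.
  by apply/eqP/matrixP => i j; rewrite (ord1 i) mxE; apply/eqP; rewrite -[_ == _]negbK.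
have [b _ vb_max] := @arg_maxP _ _ _ b0 xpredT (fun b => normc (v 0 b)) isT.
exists b => k.
have vb_gt0 : 0 < normc (v 0 b).
  apply: lt_le_trans (vb_max b0 isT); rewrite lt_def normc_ge0 andbT.
  by apply: contra vb0 => /eqP/ComplexField.Normc.eq0_normc ->.
have vAkb : z ^+ k * v 0 b = \sum_a v 0 a * (A ^+ k) a b.
  by have := congr1 (fun M : 'rV[C]_n => M 0 b) (vAk k); rewrite /= !mxE => <-.
rewrite -(ler_pM2r vb_gt0) -normcX -ComplexField.Normc.normcM vAkb.
apply: le_trans (normc_sum_le _ _ _) _; rewrite big_distrl /=.
apply: ler_sum => a _; rewrite ComplexField.Normc.normcM mulrC.
by apply: ler_wpM2l; [apply: normc_ge0 | apply: vb_max].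
Qed.

End MatrixPowerGrowth.

Section SpectralRadius.
Variables (R : realType) (n : nat) (M : 'M[R]_n).
Local Notation normc := ComplexField.Normc.normc.
Local Notation Mc := (map_mx (fun x : R => x%:C%C) M).
Local Notation eigen_norms :=
  [set normc z | z in [set z : R[i] | eigenvalue Mc z]]%classic.

Lemma eigen_norms_ubound : has_ubound eigen_norms.
Proof.
exists (mnorm (Mc ^+ 1)); apply/ubP => _ [z Mz <-].
have [b zb] := eigenvalue_pow_le_colsum Mz.
by apply: le_trans (colsum_le_mnorm _ b); have := zb 1%N; rewrite expr1.
Qed.

Lemma eigenvalue_le_spectral_radius z :
  eigenvalue Mc z -> normc z <= spectral_radius M.
Proof. by move=> Mz; apply: ub_le_sup eigen_norms_ubound _ _; exists z. Qed.

Lemma spectral_radius_ge0 : 0 <= spectral_radius M.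
Proof.
have [[_ [z Mz _]]|no_eig] := pselect (eigen_norms !=set0)%classic.
  exact: le_trans (normc_ge0 z) (eigenvalue_le_spectral_radius Mz).
rewrite /spectral_radius (_ : eigen_norms = set0%classic) ?sup0 //.
by apply/seteqP; split => x // ex; case: no_eig; exists x.
Qed.

Lemma spectral_radius_gt x : 0 <= x -> x < spectral_radius M ->
  exists2 z, eigenvalue Mc z & x < normc z.
Proof.
move=> x0 x_lt; have [|_ [z Mz <-]] := @sup_gt _ eigen_norms x _ x_lt.
  apply/set0P/negP => /eqP no_eig; move: x_lt.
  by rewrite /spectral_radius no_eig sup0 ltNge x0.
by exists z.
Qed.

End SpectralRadius.

Section SeriesBounds.
Variable R : realType.

Lemma mul_lt1_gap (t rho : R) : 0 <= t -> t * rho < 1 ->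
  exists2 q, rho < q & t * q < 1.
Proof.
move=> t0 t_rho; exists (rho + (1 - t * rho) / (t + 1)).
  by rewrite ltrDl divr_gt0 ?subr_gt0 // ltr_wpDl.
have lt_gap : t * (1 - t * rho) / (t + 1) < 1 - t * rho.
  by rewrite ltr_pdivrMr ?ltr_wpDl //; nra.
by rewrite mulrDr mulrA; lra.
Qed.

Lemma cvg_series_geometric_bound (u : R^nat) (t q L : R) :
  0 <= t -> 0 <= q -> t * q < 1 ->
  (forall k, 0 <= u k) -> (forall k, u k <= L * q ^+ k) ->
  cvgn (series (fun k => t ^+ k * u k)).
Proof.
move=> t0 q0 tq1 u0 uL.
have L0 : 0 <= L by apply: le_trans (u0 0%N) _; have := uL 0%N; rewrite expr0 mulr1.
apply: (series_le_cvg (v_ := geometric L (t * q))).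
- by move=> k; rewrite mulr_ge0 ?exprn_ge0.
- by move=> k; rewrite /geometric /= mulr_ge0 ?exprn_ge0 ?mulr_ge0.
- by move=> k; rewrite /geometric /= exprMn mulrCA ler_wpM2l ?exprn_ge0.
- by apply: is_cvg_geometric_series; rewrite ger0_norm ?mulr_ge0.
Qed.

Lemma cvg_big_sum0 (I : Type) (r : seq I) (u : I -> R^nat) :
  (forall i, u i @ \oo --> 0)%classic ->
  ((fun k => \sum_(i <- r) u i k) @ \oo --> 0)%classic.
Proof.
move=> u0; elim: r => [|i r IH].
  have -> : (fun k => \sum_(i <- [::]) u i k) = fun=> 0.
    by apply/funext => k; rewrite big_nil.
  exact: cvg_cst.
have -> : (fun k => \sum_(j <- i :: r) u j k) = u i + fun k => \sum_(j <- r) u j k.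
  by apply/funext => k; rewrite big_cons.
have := cvgD (u0 i) IH; rewrite addr0; exact.
Qed.

Lemma ereal_sup_threshold (S : set R) (rho : R) : 0 <= rho ->
  (forall t, 0 <= t -> t * rho < 1 -> S t) -> (forall t, S t -> t * rho <= 1) ->
  ereal_sup [set x%:E | x in S]%classic =
    if rho == 0 then +oo%E else (rho^-1)%:E.
Proof.
move=> rho0 small large; set s := ereal_sup _.
have le_s t : 0 <= t -> t * rho < 1 -> (t%:E <= s)%E.
  by move=> t0 t_rho; apply: ereal_sup_ubound; exists t => //; apply: small.
have s_ge0 : (0 <= s)%E by apply: le_s; rewrite ?mul0r.
case: eqP => [rho_eq0|/eqP rho_neq0].
  case: s s_ge0 le_s => [r _ le_s| // |//].
  have := le_s (`|r| + 1)%R (addr_ge0 (normr_ge0 r) ler01).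
  rewrite rho_eq0 mulr0 ltr01 lee_fin => /(_ isT) r_le {le_s}.
  by exfalso; have := ler_norm r; lra.
have rho_gt0 : 0 < rho by rewrite lt_def rho_neq0.
apply/eqP; rewrite eq_le; apply/andP; split.
  apply: ge_ereal_sup => _ [t St <-].
  by rewrite lee_fin -div1r ler_pdivlMr // large.
case: s s_ge0 le_s => [r r0 le_s| _ _ |//]; last by rewrite leey.
rewrite lee_fin leNgt; apply/negP => r_lt; rewrite lee_fin in r0.
have m0 : 0 <= (r + rho^-1) / 2 by rewrite divr_ge0 // addr_ge0 // invr_ge0 ltW.
have r_rho : r * rho < 1 by rewrite -ltr_pdivlMr // div1r.
have : (r + rho^-1) / 2 * rho < 1 by rewrite mulrAC mulrDl mulVf //; lra.
by move=> /(le_s _ m0); rewrite lee_fin; lra.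
Qed.

End SeriesBounds.

Lemma big_tuple_cons (R : Type) (idx : R) (op : Monoid.com_law idx)
    (T : finType) k (P : pred (k.+1.-tuple T)) (F : k.+1.-tuple T -> R) :
  \big[op/idx]_(s | P s) F s =
  \big[op/idx]_x \big[op/idx]_(t : k.-tuple T | P [tuple of x :: t])
     F [tuple of x :: t].
Proof.
rewrite pair_big_dep /=.
rewrite (reindex (fun p : T * k.-tuple T => [tuple of p.1 :: p.2])) /=.
  by apply: eq_bigl => -[x t].
exists (fun s => (thead s, [tuple of behead s])) => [[x t] _|s _] /=.
  by rewrite theadE; congr pair; apply: val_inj.
by rewrite -tuple_eta.
Qed.

Lemma forall_ordS n (P : pred 'I_n.+1) :
  [forall i, P i] = P ord0 && [forall i : 'I_n, P (lift ord0 i)].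
Proof.
apply/forallP/andP => [H|[H0 /forallP H] i]; first by split=> //; apply/forallP.
by case: (unliftP ord0 i) => [j ->|->].
Qed.

Lemma forall_ord0 (P : pred 'I_0) : [forall i, P i] = true.
Proof. by apply/forallP => -[]. Qed.

Section NonBacktrackingWalks.
Variables (R : realType) (T : finType) (G : rel T) (w : T -> T -> R).

Fixpoint walk_weight (v : T) (s : seq T) : R :=
  if s is x :: t then w v x * walk_weight x t else 1.

(* [nb_walk u v b s]: [v :: s] is a non-backtracking walk entered from [u];
   when [b] holds, its first step may go back to [u] (no previous edge). *)
Fixpoint nb_walk (u v : T) (b : bool) (s : seq T) : bool :=
  if s is x :: t then [&& G v x, b || (x != u) & nb_walk v x false t] else true.

Definition nb_walk_sum k u v b j : R :=
  \sum_(t : k.-tuple T | nb_walk u v b t && (last v t == j)) walk_weight v t.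

Definition pk_walk n (d v : T) (t : seq T) :=
  [forall r : 'I_n, G (nth d (v :: t) r) (nth d (v :: t) r.+1)] &&
  [forall r : 'I_n.-1, nth d (v :: t) r.+2 != nth d (v :: t) r].

Definition head_avoids (u : T) (t : seq T) :=
  if t is y :: _ then y != u else true.

Lemma pk_walk_cons n d v x t : size t = n ->
  pk_walk n.+1 d v (x :: t) = [&& G v x, head_avoids v t & pk_walk n d x t].
Proof.
move=> st; rewrite /pk_walk forall_ordS /=.
under eq_forallb => i do rewrite add0n.
rewrite -!andbA; congr andb; rewrite andbCA; congr andb.
case: n st => [|n] st; first by case: t st => // _; rewrite /= !forall_ord0.
by rewrite forall_ordS; case: t st.
Qed.

Lemma nb_walk_pk_walk t n d u v : size t = n ->
  nb_walk u v false t = head_avoids u t && pk_walk n d v t.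
Proof.
elim: t n u v => [|x t IH] [|n] u v //= st; first by rewrite /pk_walk !forall_ord0.
case: st => st; rewrite pk_walk_cons // (IH n) //=.
by case: (G v x); case: (x != u).
Qed.

Lemma nb_walk_first_free t n d u v : size t = n ->
  nb_walk u v true t = pk_walk n d v t.
Proof.
case: t n => [|x t] [|n] //= st; first by rewrite /pk_walk !forall_ord0.
by case: st => st; rewrite pk_walk_cons // (@nb_walk_pk_walk t n d) // andbA.
Qed.

Lemma prod_walk_weight t n d v : size t = n ->
  \prod_(r < n) w (nth d (v :: t) r) (nth d (v :: t) r.+1) = walk_weight v t.
Proof.
elim: t n v => [|x t IH] [|n] v //= st; first by rewrite big_ord0.
rewrite big_ord_recl /=; case: st => st; rewrite -(IH n x st).
by congr (_ * _); apply: eq_bigr => i _; rewrite lift0.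
Qed.

Lemma pk_nb_walk_sum k i j : pk G w k i j = nb_walk_sum k i i true j.
Proof.
rewrite /pk big_tuple_cons (bigD1 i) //= [X in _ + X]big1 ?addr0; last first.
  by move=> x /negbTE xi; apply: big_pred0 => t; rewrite tnth0 xi.
apply: eq_big => t; last by rewrite (@prod_walk_weight t k i i (size_tuple t)).
rewrite tnth0 eqxx /= (@nb_walk_first_free t k i i i (size_tuple t)) /pk_walk.
have last_t : nth i (i :: t) k = last i t by rewrite (last_nth i) size_tuple.
by rewrite (tnth_nth i) /= last_t andbC -andbA.
Qed.

Lemma nb_walk_sum0 u v b j : nb_walk_sum 0 u v b j = (v == j)%:R.
Proof.
rewrite /nb_walk_sum big_mkcond /=.
rewrite (eq_bigr (fun _ => (v == j)%:R)) => [|t _]; last first.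
  by rewrite (tuple0 t) /=; case: (v == j).
by rewrite sumr_const card_tuple expn0 mulr1n.
Qed.

Lemma nb_walk_sumS k u v b j : nb_walk_sum k.+1 u v b j =
  \sum_x (if G v x && (b || (x != u)) then w v x * nb_walk_sum k v x false j else 0).
Proof.
rewrite /nb_walk_sum big_tuple_cons; apply: eq_bigr => x _ /=.
case: ifP => H; last by apply: big_pred0 => t; rewrite andbA H.
by rewrite big_distrr /=; apply: eq_bigl => t; rewrite andbA H.
Qed.

End NonBacktrackingWalks.

Lemma ler_sum_term (R : numDomainType) (I : finType) (F : I -> R) i0 :
  (forall i, 0 <= F i) -> F i0 <= \sum_i F i.
Proof. by move=> F0; rewrite (bigD1 i0) //= lerDl sumr_ge0. Qed.

Lemma map_mxX (aR rR : pzRingType) (f : {rmorphism aR -> rR}) n (A : 'M[aR]_n) k :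
  map_mx f (A ^+ k) = map_mx f A ^+ k.
Proof.
elim: k => [|k IH]; first by rewrite !expr0 map_mx1.
by rewrite !exprS -!mulmxE map_mxM IH.
Qed.

Section HashimotoWalks.
Variables (R : realType) (T : finType) (G : rel T) (w : T -> T -> R).
Hypothesis w_gt0 : forall i j, G i j -> 0 < w i j.

Local Notation n := #|edges G|.
Local Notation E a := (@enum_val _ (pred_of_set (edges G)) a).
Local Notation V := (hashimoto G w).

Definition sqrtw (a : 'I_n) := Num.sqrt (w (E a).1 (E a).2).

Lemma enum_edgeP a : G (E a).1 (E a).2.
Proof. by have := enum_valP a; rewrite inE. Qed.

Lemma sqrtw_gt0 a : 0 < sqrtw a.
Proof. by rewrite sqrtr_gt0 w_gt0 // enum_edgeP. Qed.

Lemma sqrtw_sq a : sqrtw a * sqrtw a = w (E a).1 (E a).2.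
Proof. by rewrite -expr2 sqr_sqrtr // ltW // w_gt0 // enum_edgeP. Qed.

Lemma hashimotoE a b : V a b =
  if ((E a).2 == (E b).1) && ((E b).2 != (E a).1) then sqrtw a * sqrtw b else 0.
Proof. by rewrite mxE /= sqrtrM // ltW // w_gt0 // enum_edgeP. Qed.

Lemma sum_edges (F : T * T -> R) :
  \sum_(a : 'I_n) F (E a) = \sum_x \sum_y (if G x y then F (x, y) else 0).
Proof.
rewrite -big_enum_val /= big_mkcond /= pair_big /=.
by apply: eq_bigr => -[x y] _; rewrite inE.
Qed.

Lemma hashimoto_ge0 a b : 0 <= V a b.
Proof.
by rewrite hashimotoE; case: ifP => // _; rewrite mulr_ge0 // ltW // sqrtw_gt0.
Qed.

Lemma hashimoto_pow_ge0 k a b : 0 <= (V ^+ k) a b.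
Proof.
elim: k a b => [|k IH] a b; first by rewrite expr0 mxE ler0n.
rewrite exprS -mulmxE mxE; apply: sumr_ge0 => c _.
by rewrite mulr_ge0 ?hashimoto_ge0.
Qed.

(* One step of V continues a non-backtracking walk through its last edge;
   the inner square roots recombine into the weight of that edge. *)
Lemma hashimoto_pow_sqrtw k a j :
  \sum_b (V ^+ k) a b * (sqrtw b * ((E b).2 == j)%:R) =
  sqrtw a * nb_walk_sum G w k (E a).1 (E a).2 false j.
Proof.
elim: k a => [|k IH] a.
  rewrite nb_walk_sum0 (bigD1 a) //= [X in _ + X]big1 ?addr0 => [|b ba].
    by rewrite expr0 mxE eqxx mul1r.
  by rewrite expr0 mxE eq_sym (negbTE ba) mul0r.
rewrite exprS -mulmxE.
under eq_bigr => b _ do rewrite mxE big_distrl /=.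
rewrite exchange_big /=.
under eq_bigr => c _ do under eq_bigr => b _ do rewrite -mulrA.
under eq_bigr => c _ do rewrite -big_distrr /= IH hashimotoE.
rewrite nb_walk_sumS big_distrr /=.
pose F (e : T * T) := if ((E a).2 == e.1) && (e.2 != (E a).1)
  then sqrtw a * (w e.1 e.2 * nb_walk_sum G w k e.1 e.2 false j) else 0.
transitivity (\sum_c F (E c)).
  apply: eq_bigr => c _; rewrite /F; case: ifP => _; last by rewrite mul0r.
  by rewrite -!mulrA (mulrA (sqrtw c)) sqrtw_sq.
rewrite sum_edges (bigD1 (E a).2) //= [X in _ + X]big1 => [|x /negbTE xa].
  rewrite addr0 /F /=; apply: eq_bigr => y _; rewrite eqxx /=.
  by case: (G _ y); case: (y != _); rewrite ?mulr0.
by apply: big1 => y _; rewrite /F /= eq_sym xa if_same.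
Qed.

Lemma pkS_hashimoto k i j : pk G w k.+1 i j =
  \sum_a \sum_b ((E a).1 == i)%:R * sqrtw a * (V ^+ k) a b *
                (sqrtw b * ((E b).2 == j)%:R).
Proof.
under eq_bigr => a _ do under eq_bigr => b _ do rewrite -mulrA.
under eq_bigr => a _ do
  rewrite -big_distrr /= hashimoto_pow_sqrtw -mulrA (mulrA (sqrtw a)) sqrtw_sq.
rewrite pk_nb_walk_sum nb_walk_sumS.
rewrite (sum_edges (fun e => (e.1 == i)%:R * (w e.1 e.2 * nb_walk_sum G w k e.1 e.2 false j))).
rewrite [RHS](bigD1 i) //= [X in _ + X]big1 => [|x /negbTE xi].
  by rewrite addr0; apply: eq_bigr => y _; rewrite eqxx mul1r andbT.
by apply: big1 => y _; rewrite xi mul0r if_same.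
Qed.

Lemma pk_ge0 k i j : 0 <= pk G w k i j.
Proof.
case: k => [|k]; first by rewrite pk_nb_walk_sum nb_walk_sum0 ler0n.
rewrite pkS_hashimoto; apply: sumr_ge0 => a _; apply: sumr_ge0 => b _.
by rewrite !mulr_ge0 ?ler0n ?hashimoto_pow_ge0 // ltW // sqrtw_gt0.
Qed.


Lemma pkS_le_hashimoto k i j :
  pk G w k.+1 i j <= \sum_a \sum_b sqrtw a * (V ^+ k) a b * sqrtw b.
Proof.
rewrite pkS_hashimoto; apply: ler_sum => a _; apply: ler_sum => b _.
have summand_ge0 : 0 <= sqrtw a * (V ^+ k) a b * sqrtw b.
  by rewrite !mulr_ge0 ?hashimoto_pow_ge0 // ltW // sqrtw_gt0.
by case: (_ == i); case: (_ == j); rewrite /= ?mul0r ?mulr0 ?mul1r ?mulr1 ?mulrA.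
Qed.

Lemma pkS_colsum_ge k b :
  sqrtw b * \sum_a sqrtw a * (V ^+ k) a b <= \sum_i pk G w k.+1 i (E b).2.
Proof.
under [X in _ <= X]eq_bigr => i _ do rewrite pkS_hashimoto.
rewrite exchange_big big_distrr /=; apply: ler_sum => a _.
have term_ge0 i a' b' : 0 <= ((E a').1 == i)%:R * sqrtw a' * (V ^+ k) a' b' *
    (sqrtw b' * ((E b').2 == (E b).2)%:R).
  by rewrite !mulr_ge0 ?ler0n ?hashimoto_pow_ge0 // ltW // sqrtw_gt0.
apply: le_trans (ler_sum_term (E a).1 _) => [|i]; last first.
  by apply: sumr_ge0 => b' _; apply: term_ge0.
apply: le_trans (ler_sum_term b _) => [|b']; last exact: term_ge0.
by rewrite !eqxx mulr1 mul1r mulrC.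
Qed.

Local Notation Vc := (map_mx (fun x : R => x%:C%C) V).
Local Notation normc := ComplexField.Normc.normc.

Lemma normc_hashimoto_pow k a b : normc ((Vc ^+ k) a b) = (V ^+ k) a b.
Proof.
by rewrite -(map_mxX (real_complex R)) mxE normc_real ger0_norm ?hashimoto_pow_ge0.
Qed.

Lemma pk_geometric_bound q : spectral_radius V < q ->
  exists L, forall k i j, pk G w k i j <= L * q ^+ k.
Proof.
move=> rho_q; have rho0 := spectral_radius_ge0 V.
have q_gt0 : 0 < q by apply: le_lt_trans rho_q.
have [K K0 VK] :=
  mxpow_entry_bound rho0 rho_q (@eigenvalue_le_spectral_radius _ _ V).
pose S := \sum_a \sum_b sqrtw a * sqrtw b.
have S0 : 0 <= S.
  by apply: sumr_ge0 => a _; apply: sumr_ge0 => b _; rewrite mulr_ge0 // ltW ?sqrtw_gt0.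
exists (1 + K * S / q) => -[|k] i j.
  rewrite pk_nb_walk_sum nb_walk_sum0 expr0 mulr1 -[_%:R]addr0.
  by apply: lerD; [rewrite lern1 leq_b1 | rewrite !mulr_ge0 // invr_ge0 ltW].
apply: le_trans (pkS_le_hashimoto k i j) _.
have qk0 : 0 <= q ^+ k by rewrite exprn_ge0 // ltW.
apply: (@le_trans _ _ (K * S * q ^+ k)).
  rewrite mulrAC /S big_distrr /=; apply: ler_sum => a _.
  rewrite big_distrr /=; apply: ler_sum => b _.
  rewrite [X in X <= _]mulrAC [X in _ <= X]mulrC; apply: ler_wpM2l.
    by rewrite mulr_ge0 // ltW // sqrtw_gt0.
  by have := VK k a b; rewrite normc_hashimoto_pow.
rewrite exprS mulrA mulrDl mul1r divfK ?gt_eqF //.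
by apply: ler_wpM2r => //; rewrite lerDr ltW.
Qed.

Lemma pkS_eigenvalue_lower z : eigenvalue Vc z ->
  exists b, exists2 c, 0 < c &
    forall k, c * normc z ^+ k <= \sum_i pk G w k.+1 i (E b).2.
Proof.
move=> Vz; have [b zb] := eigenvalue_pow_le_colsum Vz.
have [a0 _ a0_min] := @arg_minP _ _ _ b xpredT sqrtw isT.
exists b, (sqrtw b * sqrtw a0); first by rewrite mulr_gt0 ?sqrtw_gt0.
move=> k; apply: le_trans (pkS_colsum_ge k b); rewrite -mulrA.
apply: ler_wpM2l; first exact/ltW/sqrtw_gt0.
apply: (@le_trans _ _ (sqrtw a0 * \sum_a (V ^+ k) a b)).
  apply: ler_wpM2l; first exact/ltW/sqrtw_gt0.
  by have := zb k; under eq_bigr => a _ do rewrite normc_hashimoto_pow.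
rewrite big_distrr /=; apply: ler_sum => a _.
by rewrite ler_wpM2r ?hashimoto_pow_ge0 ?a0_min.
Qed.

Lemma cvg_pk_series_small t : 0 <= t -> t * spectral_radius V < 1 ->
  forall i j, cvgn (series (fun k => t ^+ k * pk G w k i j)).
Proof.
move=> t0 t_rho i j; have [q rho_q tq] := mul_lt1_gap t0 t_rho.
have [L pkL] := pk_geometric_bound rho_q.
apply: (cvg_series_geometric_bound t0 _ tq) => [|k|k]; [|exact: pk_ge0|exact: pkL].
by apply: ltW; apply: le_lt_trans rho_q; apply: spectral_radius_ge0.
Qed.

Lemma cvg_pk_series_large t :
  (forall i j, cvgn (series (fun k => t ^+ k * pk G w k i j))) ->
  0 <= t -> t * spectral_radius V <= 1.
Proof.
move=> t_cvg t0; rewrite leNgt; apply/negP => t_rho.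
have t_gt0 : 0 < t by rewrite lt_def t0 andbT; apply: contraTneq t_rho => ->; rewrite mul0r ltr10.
have inv_t_lt : t^-1 < spectral_radius V by rewrite -(ltr_pM2l t_gt0) mulfV ?gt_eqF.
have inv_t_ge0 : 0 <= t^-1 by rewrite invr_ge0 ltW.
have [z Vz tz] := spectral_radius_gt inv_t_ge0 inv_t_lt.
have {}tz : 1 <= t * normc z.
  by move: tz; rewrite -(ltr_pM2l t_gt0) mulfV ?gt_eqF // => /ltW.
have [b [c c_gt0 lower]] := pkS_eigenvalue_lower Vz.
have terms0 := cvg_big_sum0 (index_enum T)
  (u := fun i k => t ^+ k * pk G w k i (E b).2) (fun i => cvg_series_cvg_0 (t_cvg i _)).
have : c * t <= 0.
  rewrite -(cvg_lim _ terms0) //; apply: limr_ge; first by apply/cvg_ex; exists 0.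
  exists 1%N => // -[//|k] _ /=; rewrite -big_distrr /=.
  apply: le_trans (ler_wpM2l (exprn_ge0 _ t0) (lower k)).
  have -> : t ^+ k.+1 * (c * normc z ^+ k) = c * t * (t * normc z) ^+ k.
    by rewrite exprMn exprS; ring.
  rewrite -[X in X <= _]mulr1; apply: ler_wpM2l; first by rewrite mulr_ge0 // ltW.
  exact: exprn_ege1.
by move/(lt_le_trans (mulr_gt0 c_gt0 t_gt0)); rewrite ltxx.
Qed.

End HashimotoWalks.


Theorem theorem5p2 (R : realType) (T : finType) (G : rel T)
    (w : T -> T -> R) (Hloop : irreflexive G)
    (Hw : forall i j, G i j -> 0 < w i j) :
  conv_radius (pk G w) =
    if spectral_radius (hashimoto G w) == 0 then +oo%E
    else ((spectral_radius (hashimoto G w))^-1)%:E.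
Proof.
apply: ereal_sup_threshold => [|t t0 t_rho|t [t0 t_cvg]].
- exact: spectral_radius_ge0.
- by split=> //; apply: cvg_pk_series_small.
- exact: cvg_pk_series_large.
Qed.
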